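(* Let $W=V/\operatorname{Im}u$, $\zeta:V\to W$ the projection, $W_q=\zeta(\ker u^q)$ for $q\ge0$, and $P=\{g\in GL(W):g(W_q)=W_q\ \forall q\}$. Let $Z(u)=\{g\in GL(V):gu=ug\}$ and let $\varphi:Z(u)\to GL(W)$ be the morphism of algebraic groups sending $g$ to the induced map on $W$ (its image lies in $P$). Then there is a morphism of algebraic groups $\psi:P\to Z(u)$ such that $\varphi\circ\psi=\mathrm{id}_P$.
   Context: $V$ is a finite-dimensional complex vector space and $u:V\to V$ is nilpotent. *)

From HB Require Import structures.
From mathcomp Require Import all_boot all_order all_algebra all_field.
Set Implicit Arguments. Unset Strict Implicit. Unset Printing Implicit Defensive.
Import GRing.Theory Num.Theory.
Local Open Scope ring_scope.

(* Row-vector convention: V = 'rV[F]_n, a matrix A : 'M_n acts as v |-> v *m A. *)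

Definition nilpotent_mx (F : fieldType) (n : nat) (u : 'M[F]_n) : Prop :=
  exists k : nat, u ^+ k = 0.

(* Regular functions on GL_m (the coordinate ring F[x_ij, det^-1]):
   the smallest class of functions 'M_m -> F containing constants,
   matrix coordinates and 1/det, closed under + and *. *)
Inductive regular_fun (F : fieldType) (m : nat) : ('M[F]_m -> F) -> Prop :=
  | reg_const (c : F) : regular_fun (fun _ => c)
  | reg_coord (i j : 'I_m) : regular_fun (fun A => A i j)
  | reg_invdet : regular_fun (fun A => (\det A)^-1)
  | reg_add f g : regular_fun f -> regular_fun g -> regular_fun (fun A => f A + g A)
  | reg_mul f g : regular_fun f -> regular_fun g -> regular_fun (fun A => f A * g A).

Definition Wq (F : fieldType) (n m : nat) (u : 'M[F]_n) (zeta : 'M[F]_(n, m)) (q : nat)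
  : 'M[F]_(n, m) := (kermx (u ^+ q) *m zeta)%R.

Definition in_P (F : fieldType) (n m : nat) (u : 'M[F]_n) (zeta : 'M[F]_(n, m))
  (g : 'M[F]_m) : Prop :=
  g \in unitmx /\ forall q : nat, (Wq u zeta q *m g == Wq u zeta q)%MS.

Definition in_Zu (F : fieldType) (n : nat) (u : 'M[F]_n) (h : 'M[F]_n) : Prop :=
  h \in unitmx /\ h *m u = u *m h.

From HB Require Import structures.
From mathcomp Require Import all_boot all_order all_algebra all_field.
From Stdlib Require Import FunctionalExtensionality.
Import GRing.Theory Num.Theory.
Local Open Scope ring_scope.
Set Implicit Arguments. Unset Strict Implicit.

(* The proof works over any field and never uses that g is invertible except
   to conclude that psi g is.

   1. An adapted section is a right inverse S of zeta with S(W_q) <= ker u^q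
      for all q.  It is built by induction on q: on a complement of W_q in
      W_(q+1) the old section is replaced by a lift of W_(q+1) into ker u^(q+1).
   2. If S is adapted and \sum_j S(a_j) u^j = 0, then a_j lies in W_j
      (peel off the j = 0 term by applying zeta).
   3. With uinv u = 1 - zeta S every v in V is \sum_j S(v uinv^j zeta) u^j,
      and psi g sends \sum_j S(a_j) u^j to \sum_j S(a_j g).  By 2, this is
      well defined as soon as g stabilises every W_q, which gives
      multiplicativity, commutation with u and phi (psi g) = g.
   4. The entries of psi g are sums of entries of products A g B, hence
      regular functions of g; the theorem collects these facts. *)

Section Filtration.
Variables (F : fieldType) (n m : nat) (u : 'M[F]_n) (zeta : 'M[F]_(n, m)).
Local Notation W := (Wq u zeta).

Lemma Wq0 : W 0 = 0.
Proof.
rewrite /Wq expr0; have /eqP -> : kermx (1%:M : 'M[F]_n) == 0.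
  by rewrite kermx_eq0 row_free_unit unitmx1.
by rewrite mul0mx.
Qed.

Lemma Wq_mono q1 q2 : (q1 <= q2)%N -> (W q1 <= W q2)%MS.
Proof.
move=> le_q; rewrite /Wq submxMr // sub_kermx -(subnKC le_q) exprD -mulmxE.
by rewrite mulmxA mulmx_ker mul0mx.
Qed.

(* g stabilises the filtration (as a row space inclusion; for invertible g
   this is the condition defining P). *)
Definition stable (g : 'M[F]_m) : Prop := forall q, (W q *m g <= W q)%MS.

Lemma in_P_stable g : in_P u zeta g -> stable g.
Proof. by move=> [_ g_P] q; case/andP: (g_P q). Qed.

Lemma in_P_inv g : in_P u zeta g -> in_P u zeta (invmx g).
Proof.
move=> [g_unit g_P]; split=> [|q]; first by rewrite unitmx_inv.
case/andP: (g_P q) => Wg_sub W_subg; apply/andP; split.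
  by rewrite -{2}(mulmxK g_unit (W q)) submxMr.
by rewrite -{1}(mulmxK g_unit (W q)) submxMr.
Qed.

Definition adapted_upto (Q : nat) (S : 'M[F]_(m, n)) : Prop :=
  S *m zeta = 1%:M /\ forall q, (q <= Q)%N -> W q *m S *m u ^+ q = 0.

Definition adapted_section (S : 'M[F]_(m, n)) : Prop :=
  S *m zeta = 1%:M /\ forall q, W q *m S *m u ^+ q = 0.

Lemma lift_Wq q : exists T : 'M[F]_(m, n),
  T *m u ^+ q = 0 /\ forall p (x : 'M[F]_(p, m)), (x <= W q)%MS -> x *m T *m zeta = x.
Proof.
exists (pinvmx (W q) *m kermx (u ^+ q)); split.
  by rewrite -mulmxA mulmx_ker mulmx0.
by move=> p x xW; rewrite -mulmxA -(mulmxA (pinvmx _)) mulmxA mulmxKpV.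
Qed.

(* Inductive step: correct S0 on a complement of W_Q in W_(Q+1), using a
   projection E onto that complement along W_Q. *)
Lemma adapted_step Q S0 : adapted_upto Q S0 -> exists S, adapted_upto Q.+1 S.
Proof.
move=> [S0_zeta S0_W].
have [T [T_u T_zeta]] := lift_Wq Q.+1.
pose E := proj_mx (<<W Q.+1>> :\: <<W Q>>)%MS <<W Q>>%MS.
have capE : ((<<W Q.+1>> :\: <<W Q>>) :&: <<W Q>> = 0)%MS by apply: capmx_diff.
have E_W : (E <= W Q.+1)%MS.
  rewrite -[E]mul1mx; apply: submx_trans (proj_mx_sub _ _ _) _.
  by apply: submx_trans (diffmxSl _ _) _; rewrite genmxE.
have W_E : (W Q.+1 - W Q.+1 *m E <= W Q)%MS.
  rewrite -(genmxE (W Q)); apply: proj_mx_compl_sub.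
  rewrite -(genmxE (W Q.+1)) -{1}(addsmx_diff_cap_eq <<W Q.+1>> <<W Q>>)%MS.
  by apply: addsmxS => //; apply: capmxSr.
exists ((1%:M - E) *m S0 + E *m T); split.
  by rewrite mulmxDl -mulmxA S0_zeta mulmx1 T_zeta // subrK.
move=> q; rewrite leq_eqVlt => /orP [/eqP -> | ]; last first.
  rewrite ltnS => le_qQ; have W_Q : (W q <= <<W Q>>)%MS by rewrite genmxE Wq_mono.
  rewrite mulmxDr mulmxDl (mulmxA _ E T) (mulmxA (W q)) mulmxBr mulmx1.
  by rewrite (proj_mx_0 capE W_Q) !mul0mx addr0 subr0 S0_W.
rewrite mulmxDr mulmxDl (mulmxA _ E T) -(mulmxA _ T) T_u mulmx0 addr0.
rewrite (mulmxA (W Q.+1)) mulmxBr mulmx1 -mulmxA; apply/sub_kermxP.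
apply: submx_trans W_E _; apply/sub_kermxP.
by rewrite exprSr -mulmxE !mulmxA S0_W ?mul0mx.
Qed.

(* Any right inverse of zeta (which exists since zeta is onto) is adapted up
   to 0, as W_0 = 0. *)
Lemma adapted_upto_exists Q : row_full zeta -> exists S, adapted_upto Q S.
Proof.
move=> zeta_full; elim: Q => [|Q [S0 /adapted_step //]].
exists (pinvmx zeta); split; first by rewrite -[pinvmx zeta]mul1mx mulmxKpV ?sub1mx.
by move=> q; rewrite leqn0 => /eqP ->; rewrite Wq0 !mul0mx.
Qed.

(* For q >= N the condition is empty, u being nilpotent of index N. *)
Lemma adapted_section_exists N :
  row_full zeta -> u ^+ N = 0 -> exists S, adapted_section S.
Proof.
move=> zeta_full uN; have [S [S_zeta S_W]] := adapted_upto_exists N zeta_full.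
exists S; split=> // q; case: (leqP q N) => [/S_W // | /ltnW le_Nq].
by rewrite -(subnKC le_Nq) exprD uN mul0r mulmx0.
Qed.

Hypothesis u_zeta : u *m zeta = 0.

Lemma uX_zeta j : u ^+ j.+1 *m zeta = 0.
Proof. by rewrite exprSr -mulmxE -mulmxA u_zeta mulmx0. Qed.

Section AdaptedSection.
Variable S : 'M[F]_(m, n).
Hypothesis S_adapted : adapted_section S.

Lemma adapted_vanish p (x : 'M[F]_(p, m)) q : (x <= W q)%MS -> x *m S *m u ^+ q = 0.
Proof.
move=> xW; rewrite -mulmxA; apply/sub_kermxP; apply: submx_trans xW _.
by apply/sub_kermxP; rewrite mulmxA (proj2 S_adapted).
Qed.

Lemma expansion_coef p N (a : nat -> 'M[F]_(p, m)) t :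
    (\sum_(j < N) a j *m S *m u ^+ j) *m u ^+ t = 0 ->
  forall j, (j < N)%N -> (a j <= W (j + t))%MS.
Proof.
elim: N a t => [//|N IH] a t; rewrite big_ord_recl /= => sum0.
have a0_W : (a 0%N <= W t)%MS.
  move: (sum0) => /sub_kermxP/(submxMr zeta); rewrite mulmxDl mulmx_suml.
  rewrite big1 => [|i _]; last by rewrite -mulmxA uX_zeta mulmx0.
  by rewrite addr0 expr0 mulmx1 -mulmxA (proj1 S_adapted) mulmx1.
have sum0' : (\sum_(i < N) a i.+1 *m S *m u ^+ i) *m u ^+ t.+1 = 0.
  move: sum0; rewrite mulmxDl expr0 mulmx1 (adapted_vanish a0_W) add0r !mulmx_suml.
  move=> sum1; rewrite -[RHS]sum1; apply: eq_bigr => i _.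
  by rewrite -!mulmxA !mulmxE -!exprD /bump leq0n addSn addnS.
case=> [_ | j]; first by rewrite add0n.
by rewrite ltnS addSn -addnS; apply: (IH (fun i => a i.+1)).
Qed.

End AdaptedSection.
End Filtration.

Section RegularFunctions.
Variables (F : fieldType) (m : nat).

Lemma regular_ext (f g : 'M[F]_m -> F) : regular_fun f -> f =1 g -> regular_fun g.
Proof. by move=> f_reg /functional_extensionality <-. Qed.

Lemma regular_sum (I : Type) (r : seq I) (f : I -> 'M[F]_m -> F) :
  (forall i, regular_fun (f i)) -> regular_fun (fun A => \sum_(i <- r) f i A).
Proof.
move=> f_reg; elim: r => [|i r IH].
  by apply: (regular_ext (reg_const _ 0)) => A; rewrite big_nil.
by apply: (regular_ext (reg_add (f_reg i) IH)) => A; rewrite big_cons.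
Qed.

Lemma regular_sandwich k l (B : 'M[F]_(k, m)) (C : 'M[F]_(m, l)) i j :
  regular_fun (fun A => (B *m A *m C) i j).
Proof.
apply: (@regular_ext (fun A => \sum_b (\sum_a B i a * A a b) * C b j)); last first.
  by move=> A; rewrite !mxE; apply: eq_bigr => b _; rewrite mxE.
apply: regular_sum => b; apply: reg_mul (reg_const _ _).
by apply: regular_sum => a; apply: reg_mul (reg_const _ _) (reg_coord _ _ _).
Qed.

End RegularFunctions.

Section Lifting.
Variables (F : fieldType) (n m N : nat) (u : 'M[F]_n) (zeta : 'M[F]_(n, m)).
Variable S : 'M[F]_(m, n).
Hypotheses (zeta_ker : (kermx zeta == u)%MS) (uN : u ^+ N = 0).
Hypothesis S_adapted : adapted_section u zeta S.
Local Notation W := (Wq u zeta).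
Local Notation stable := (stable u zeta).

Lemma u_zeta : u *m zeta = 0.
Proof. by apply/sub_kermxP; case/andP: zeta_ker. Qed.

Lemma S_zeta : S *m zeta = 1%:M.
Proof. exact: proj1 S_adapted. Qed.

(* A partial inverse of u: uinv *m u = 1 - zeta *m S, which makes sense
   because 1 - zeta *m S has rows in ker zeta <= Im u. *)
Definition uinv : 'M[F]_n := (1%:M - zeta *m S) *m pinvmx u.

Lemma uinv_u : uinv *m u = 1%:M - zeta *m S.
Proof.
apply: mulmxKpV; case/andP: zeta_ker => ker_sub_u _; apply: submx_trans ker_sub_u.
by apply/sub_kermxP; rewrite mulmxBl mul1mx -mulmxA S_zeta mulmx1 subrr.
Qed.

(* expand a = \sum_j S(a_j) u^j; N bounds the nilpotency index of u. *)
Definition expand p (a : nat -> 'M[F]_(p, m)) : 'M[F]_(p, n) :=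
  \sum_(j < N.+1) a j *m S *m u ^+ j.

Lemma eq_expand p (a b : nat -> 'M[F]_(p, m)) :
  (forall j, a j = b j) -> expand a = expand b.
Proof. by move=> eq_ab; apply: eq_bigr => j _; rewrite eq_ab. Qed.

Lemma expandB p (a b : nat -> 'M[F]_(p, m)) :
  expand (fun j => a j - b j) = expand a - expand b.
Proof. by rewrite /expand -sumrB; apply: eq_bigr => j _; rewrite !mulmxBl. Qed.

Lemma mulmx_expand p r (x : 'M[F]_(r, p)) (a : nat -> 'M[F]_(p, m)) :
  x *m expand a = expand (fun j => x *m a j).
Proof. by rewrite /expand mulmx_sumr; apply: eq_bigr => j _; rewrite !mulmxA. Qed.

Lemma expand_zeta p (a : nat -> 'M[F]_(p, m)) : expand a *m zeta = a 0%N.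
Proof.
rewrite /expand mulmx_suml big_ord_recl big1 => [|i _]; last first.
  by rewrite -mulmxA (uX_zeta u_zeta) mulmx0.
by rewrite addr0 expr0 mulmx1 -mulmxA S_zeta mulmx1.
Qed.

Lemma expand_u p (a : nat -> 'M[F]_(p, m)) :
  expand a *m u = expand (fun j => if j is j'.+1 then a j' else 0).
Proof.
rewrite /expand mulmx_suml [RHS]big_ord_recl [LHS]big_ord_recr /=.
rewrite uN mulmx0 mul0mx addr0 !mul0mx add0r; apply: eq_bigr => i _.
by rewrite /bump leq0n add1n exprSr -mulmxE !mulmxA.
Qed.

(* Iterating 1 = zeta *m S + uinv *m u expands the identity. *)
Lemma identity_partial t :
  1%:M = \sum_(j < t) uinv ^+ j *m zeta *m S *m u ^+ j + uinv ^+ t *m u ^+ t.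
Proof.
elim: t => [|t IH]; first by rewrite big_ord0 add0r !expr0 mulmx1.
rewrite big_ord_recr /= IH -addrA; congr (_ + _).
rewrite exprSr exprS -!mulmxE (mulmxA (uinv ^+ t *m uinv) u) -(mulmxA _ uinv u).
by rewrite uinv_u mulmxBr mulmxBl mulmx1 !mulmxA addrC subrK.
Qed.

Lemma identity_expand : 1%:M = expand (fun j => uinv ^+ j *m zeta).
Proof.
rewrite {1}(identity_partial N.+1) [u ^+ N.+1]exprSr -mulmxE uN.
by rewrite mul0mx mulmx0 addr0.
Qed.

Lemma expand_stable p g (a : nat -> 'M[F]_(p, m)) :
  stable g -> expand a = 0 -> expand (fun j => a j *m g) = 0.
Proof.
move=> g_stable a0.
have a_W := expansion_coef u_zeta S_adapted (N := N.+1) (a := a) (t := 0).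
rewrite expr0 mulmx1 in a_W; apply: big1 => j _.
apply: (adapted_vanish S_adapted); apply: submx_trans (g_stable j); apply: submxMr.
by rewrite -[j in W j]addn0; apply: a_W.
Qed.

(* The lift of g: replace the coefficients of the expansion of v by their
   images under g. *)
Definition psi (g : 'M[F]_m) : 'M[F]_n := expand (fun j => uinv ^+ j *m zeta *m g).

(* psi g acts on any expansion (not only the canonical one) coefficientwise:
   this is where well-definedness is used. *)
Lemma mulmx_psi p g (a : nat -> 'M[F]_(p, m)) :
  stable g -> expand a *m psi g = expand (fun j => a j *m g).
Proof.
move=> g_stable; set x := expand a.
have coef0 : expand (fun j => a j - x *m (uinv ^+ j *m zeta)) = 0.
  by rewrite expandB -mulmx_expand -identity_expand mulmx1 subrr.
have coef_g : expand (fun j => a j *m g - x *m (uinv ^+ j *m zeta *m g)) = 0.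
  rewrite -(expand_stable g_stable coef0); apply: eq_expand => j.
  by rewrite mulmxBl !mulmxA.
by move/eqP: coef_g; rewrite expandB subr_eq0 -(mulmx_expand x) => /eqP ->.
Qed.

Lemma psi_zeta g : psi g *m zeta = zeta *m g.
Proof. by rewrite expand_zeta expr0 mul1mx. Qed.

Lemma psi1 : psi 1%:M = 1%:M.
Proof. by rewrite identity_expand; apply: eq_expand => j; rewrite mulmx1. Qed.

Lemma psiM g1 g2 : stable g2 -> psi (g1 *m g2) = psi g1 *m psi g2.
Proof. by move=> g2_stable; rewrite mulmx_psi //; apply: eq_expand => j; rewrite mulmxA.
Qed.

(* psi g commutes with u, as u acts on expansions by a shift. *)
Lemma psi_comm g : stable g -> u *m psi g = psi g *m u.
Proof.
move=> g_stable.
have u_expand : u = expand (fun j => if j is j'.+1 then uinv ^+ j' *m zeta else 0).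
  by rewrite -expand_u -identity_expand mul1mx.
rewrite {1}u_expand mulmx_psi // expand_u.
by apply: eq_expand => -[|j] /=; rewrite ?mul0mx.
Qed.

Lemma psi_regular i j : regular_fun (fun g => psi g i j).
Proof.
pose entry g := \sum_(t < N.+1) (uinv ^+ t *m zeta *m g *m (S *m u ^+ t)) i j.
apply: (@regular_ext _ _ entry).
  by apply: regular_sum => t; apply: regular_sandwich.
by move=> g; rewrite /psi /expand summxE; apply: eq_bigr => t _; rewrite mulmxA.
Qed.

(* psi maps P into Z(u); psi (g^-1) is an inverse of psi g. *)
Lemma psi_in_Zu g : in_P u zeta g -> in_Zu u (psi g).
Proof.
move=> g_P; split; last by rewrite psi_comm //; apply: in_P_stable.
have [g_unit _] := g_P; apply: (proj1 (@mulmx1_unit _ _ _ (psi (invmx g)) _)).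
by rewrite -psiM ?mulmxV ?psi1 //; apply/in_P_stable/in_P_inv.
Qed.

End Lifting.

Unset Implicit Arguments. Set Strict Implicit.

Theorem lemma3p6 (F : numClosedFieldType) (n m : nat) (u : 'M[F]_n)
    (zeta : 'M[F]_(n, m)) :
  nilpotent_mx u ->
  row_full zeta ->
  (kermx zeta == u)%MS ->
  exists psi : 'M[F]_m -> 'M[F]_n,
    (forall g, in_P u zeta g -> in_Zu u (psi g)) /\
    (forall g1 g2, in_P u zeta g1 -> in_P u zeta g2 ->
        psi (g1 *m g2) = psi g1 *m psi g2) /\
    (forall i j : 'I_n, exists f : 'M[F]_m -> F,
        regular_fun f /\ forall g, in_P u zeta g -> psi g i j = f g) /\
    (forall g, in_P u zeta g -> psi g *m zeta = zeta *m g).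
Proof.
move=> [N uN] zeta_full zeta_ker.
have [S S_adapted] := adapted_section_exists zeta_full uN.
exists (psi N u zeta S); split; [|split; [|split]].
- exact: psi_in_Zu.
- by move=> g1 g2 _ /in_P_stable; apply: psiM.
- by move=> i j; exists (fun g => psi N u zeta S g i j); split=> //; apply: psi_regular.
- by move=> g _; apply: psi_zeta.
Qed.
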